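(* Let $R$ be an associative ring with identity and $a,b,c,d\in R$ such that both $a^{\|(b,c)}$ and $d^{\|(b,c)}$ exist. Then the following are equivalent: (i) $aa^{\|(b,c)}=dd^{\|(b,c)}$; (ii) $aa^{\|(b,c)}dd^{\|(b,c)}=dd^{\|(b,c)}aa^{\|(b,c)}$; (iii) $ad^{\|(b,c)}da^{\|(b,c)}=da^{\|(b,c)}ad^{\|(b,c)}$; (iv) $ad^{\|(b,c)}$ is group invertible and $(ad^{\|(b,c)})^{\#}=da^{\|(b,c)}$; (v) $da^{\|(b,c)}$ is group invertible and $(da^{\|(b,c)})^{\#}=ad^{\|(b,c)}$.
   Context: For $a,b,c\in R$, $a$ is $(b,c)$-invertible if there exists $y\in R$ with $y\in (bRy)\cap(yRc)$, $yab=b$ and $cay=c$; such $y$ is unique and denoted $a^{\|(b,c)}$. An element $x\in R$ is group invertible if there is $z\in R$ with $xzx=x$, $zxz=z$, $xz=zx$; such $z$ is unique and denoted $x^{\#}$. *)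

From HB Require Import structures.
From mathcomp Require Import all_boot all_order all_algebra.
Set Implicit Arguments. Unset Strict Implicit. Unset Printing Implicit Defensive.
Import GRing.Theory.
Local Open Scope ring_scope.

Definition bc_inverse (R : pzRingType) (a b c y : R) : Prop :=
  (exists s : R, y = b * s * y) /\ (exists t : R, y = y * t * c) /\
  y * a * b = b /\ c * a * y = c.

Definition group_inverse (R : pzRingType) (x z : R) : Prop :=
  x * z * x = x /\ z * x * z = z /\ x * z = z * x.

Definition group_invertible (R : pzRingType) (x : R) : Prop :=
  exists z, group_inverse x z.

(* Put x := a yd and w := d ya.  Since (b,c)-inverses of different elements
   absorb one another (yd d ya = ya), we get x w = a ya and w x = d yd, and x,
   w are mutually reflexive inner inverses (x w x = x, w x w = w).  For such a
   pair w is the group inverse of x exactly when x w = w x, i.e. when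
   a ya = d yd; the idempotents a ya and d yd commute only when they are equal
   because each absorbs the other from the right. *)
From HB Require Import structures.
From mathcomp Require Import all_boot all_order all_algebra.
From Corelib Require Import Setoid.
Import GRing.Theory.
Local Open Scope ring_scope.

Lemma bc_inverse_cancel {R : pzRingType} {a b c d ya yd : R} :
  bc_inverse a b c ya -> bc_inverse d b c yd -> yd * d * ya = ya.
Proof.
move=> [[s ->] _] [_ [_ [ydb _]]].
by rewrite !mulrA ydb.
Qed.

Lemma bc_inverse_mul_proj {R : pzRingType} {a b c d ya yd : R} :
  bc_inverse a b c ya -> bc_inverse d b c yd -> a * ya * (d * yd) = a * ya.
Proof.
move=> [_ [[t yaE] _]] [_ [_ [_ cdy]]].
have -> : a * ya * (d * yd) = a * ya * t * (c * d * yd) by rewrite {1}yaE !mulrA.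
by rewrite cdy {2}yaE !mulrA.
Qed.

Lemma group_inverse_uniq (R : pzRingType) (x z1 z2 : R) :
  group_inverse x z1 -> group_inverse x z2 -> z1 = z2.
Proof.
move=> [xz1x [z1xz1 z1C]] [xz2x [z2xz2 z2C]].
have xz : x * z1 = x * z2.
  transitivity ((x * z2) * (x * z1)); first by rewrite mulrA xz2x.
  by rewrite z2C z1C -mulrA [x * (z1 * x)]mulrA xz1x.
by rewrite -{1}z1xz1 -mulrA xz mulrA -z1C xz z2C z2xz2.
Qed.

Lemma group_inverse_unique_iff (R : pzRingType) (x w : R) :
  (group_invertible x /\ forall z, group_inverse x z -> z = w) <->
  group_inverse x w.
Proof.
split=> [[[z xz] zE] | xw]; first by rewrite -(zE z xz).
by split=> [|z xz]; [exists w | exact: group_inverse_uniq xz xw].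
Qed.

Lemma group_inverse_reflexiveE (R : pzRingType) (x w : R) :
  x * w * x = x -> w * x * w = w -> group_inverse x w <-> x * w = w * x.
Proof. by move=> xwx wxw; split=> [[_ []] | xwC]. Qed.

Theorem theorem4p2 (R : pzRingType) (a b c d ya yd : R)
  (Hya : bc_inverse a b c ya) (Hyd : bc_inverse d b c yd) :
  [/\ (a * ya = d * yd <->
        a * ya * (d * yd) = d * yd * (a * ya)),
      (a * ya = d * yd <->
        a * yd * (d * ya) = d * ya * (a * yd)),
      (a * ya = d * yd <->
        group_invertible (a * yd) /\
        (forall z, group_inverse (a * yd) z -> z = d * ya))
    & (a * ya = d * yd <->
        group_invertible (d * ya) /\
        (forall z, group_inverse (d * ya) z -> z = a * yd))].
Proof.
have xw : a * yd * (d * ya) = a * ya.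
  by rewrite -{2}(bc_inverse_cancel Hya Hyd) !mulrA.
have wx : d * ya * (a * yd) = d * yd.
  by rewrite -{2}(bc_inverse_cancel Hyd Hya) !mulrA.
have xwx : a * yd * (d * ya) * (a * yd) = a * yd.
  by rewrite -mulrA wx -{3}(bc_inverse_cancel Hyd Hyd) !mulrA.
have wxw : d * ya * (a * yd) * (d * ya) = d * ya.
  by rewrite -mulrA xw -{3}(bc_inverse_cancel Hya Hya) !mulrA.
split.
- by rewrite (bc_inverse_mul_proj Hya Hyd) (bc_inverse_mul_proj Hyd Hya).
- by rewrite xw wx.
- by rewrite group_inverse_unique_iff group_inverse_reflexiveE // xw wx.
- rewrite group_inverse_unique_iff group_inverse_reflexiveE // xw wx.
  by split=> ->.
Qed.
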